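(* For every contention-resolution protocol of the form described in the context (i.e. every choice of emission probabilities $p_w$, one for each binary word $w$ of length $<k$), one can associate $m+1$ real numbers $z_0,\dots,z_m$ in $[0,1]$ with $0=z_0<z_1<\dots<z_{m-1}<z_m=1$ such that the probability of success (non-collision) of the protocol is $$\rho=\sum_{i\in\{1,\dots,m\}}(z_i-z_{i-1})f'(z_{i-1}),$$ and the probabilities used in the rounds of selection are given by $$p_w=\frac{z_{\#(w)2^{k-l(w)}+2^{k-l(w)}}-z_{\#(w)2^{k-l(w)}+2^{k-l(w)-1}}}{z_{\#(w)2^{k-l(w)}+2^{k-l(w)}}-z_{\#(w)2^{k-l(w)}}}.$$ Conversely, to every family of real numbers $z_0,\dots,z_m$ with $0=z_0<z_1<\dots<z_{m-1}<z_m=1$ one can associate such a selection protocol, with probabilities $p_w$ given by the second formula, whose probability of success is given by the first formula.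
   Context: A random number $n\ge 1$ of stations contend for a channel; $q_n\ge 0$ is the probability that exactly $n$ stations contend, $\sum_{n\geq1}q_n=1$, and $f(x)=\sum_{n\geq1}q_nx^n$ is its generating function. Contention is resolved in $k$ rounds (mini-slots) of selection, and $m=2^k$. For a word $w$ over the alphabet $\{0,1\}$, $l(w)$ denotes its length and $\#(w)$ the integer whose binary representation is $w$. At round $t\in\{1,\dots,k\}$, each station not yet eliminated emits a signal with probability $p_w$, where $w=r(1)\dots r(t-1)$ is the word of previous try-bits, $r(s)\in\{0,1\}$ indicating whether at least one station emitted at round $s$ (so at round 1 the probability is $p_{\emptyset}$). A station that does not emit and hears a signal from another station withdraws; all other stations remain. The protocol succeeds if exactly one station remains after the $k$ rounds; $\rho$ denotes this success probability. *)

From Stdlib Require Import Reals List.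
From Coquelicot Require Import Coquelicot.
Import ListNotations.
Open Scope R_scope.

(* Words over {0,1}: lists of booleans, read left to right
   (first element = r(1) = most significant bit). *)
Definition word := list bool.

Definition binval (w : word) : nat :=
  fold_left (fun acc (b : bool) => (2 * acc + (if b then 1 else 0))%nat) w 0%nat.

Fixpoint sum1 (f : nat -> R) (n : nat) : R :=
  match n with
  | O => 0
  | S n' => sum1 f n' + f n
  end.

(* Generating function f(x) = sum_{n>=1} q_n x^n (q 0 = 0 is assumed). *)
Definition genf (q : nat -> R) (x : R) : R := Series (fun n => q n * x ^ n).

(* succ p r w n = probability that, when n stations are still in contention,
   the try-bits so far form the word w, and r rounds remain, exactly one
   station remains at the end.  At the current round each of the n stations
   emits independently with probability p w; if j >= 1 stations emit
   (probability C(n,j) p^j (1-p)^(n-j)), the j emitters remain and the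
   try-bit is 1; if nobody emits (probability (1-p)^n) all n remain and the
   try-bit is 0. *)
Fixpoint succ (p : word -> R) (r : nat) (w : word) (n : nat) : R :=
  match r with
  | O => if Nat.eqb n 1 then 1 else 0
  | S r' =>
      (1 - p w) ^ n * succ p r' (w ++ [false]) n
      + sum1 (fun j => Binomial.C n j * p w ^ j * (1 - p w) ^ (n - j)
                         * succ p r' (w ++ [true]) j) n
  end.

Definition rho (k : nat) (q : nat -> R) (p : word -> R) : R :=
  Series (fun n => q n * succ p k [] n).

Definition p_of_z (k : nat) (z : nat -> R) (w : word) : R :=
  let h := (2 ^ (k - length w))%nat in
  let a := (binval w * h)%nat in
  (z (a + h)%nat - z (a + h / 2)%nat) / (z (a + h)%nat - z a).

Definition rho_of_z (k : nat) (q : nat -> R) (z : nat -> R) : R :=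
  sum1 (fun i => (z i - z (i - 1)%nat) * Derive (genf q) (z (i - 1)%nat)) (2 ^ k).

Definition admissible_z (k : nat) (z : nat -> R) : Prop :=
  z 0%nat = 0 /\ z (2 ^ k)%nat = 1 /\ (forall i, (i < 2 ^ k)%nat -> z i < z (S i)).

(** Give each station an independent uniform point of [0,1] and cut [0,1] at
    0 = z_0 < ... < z_m = 1.  If p_w is the relative length of the upper half of the dyadic
    block of cells indexed by w, the stations still present after the try-bits w are those
    whose point lies in that block, and emitting means lying in its upper half.  Hence the
    protocol succeeds iff the highest cell hit contains a single point, which for n stations
    has probability n * sum_i (z_i - z_{i-1}) z_{i-1}^{n-1}; averaging over n gives
    sum_i (z_i - z_{i-1}) f'(z_{i-1}).  Formally this identity is proved for every block by
    induction on the number of remaining rounds, the inductive step being the binomial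
    expansion of n (y + x)^{n-1}.  Conversely, z is obtained from p by splitting every block
    in ratio (1 - p_w) : p_w. *)

From Stdlib Require Import Reals List Lia Lra.
From Coquelicot Require Import Coquelicot.
Import ListNotations.
Open Scope R_scope.

Lemma sum1_ext (f g : nat -> R) n :
  (forall i, (1 <= i <= n)%nat -> f i = g i) -> sum1 f n = sum1 g n.
Proof.
  induction n as [|n IH]; intros Hfg; simpl; [reflexivity|].
  rewrite IH, (Hfg (S n)); [reflexivity | lia | intros; apply Hfg; lia].
Qed.

Lemma sum1_mult_l c f n : c * sum1 f n = sum1 (fun i => c * f i) n.
Proof. induction n as [|n IH]; simpl; [ring|]. rewrite <- IH; ring. Qed.

Lemma sum1_plus f g n : sum1 (fun i => f i + g i) n = sum1 f n + sum1 g n.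
Proof. induction n as [|n IH]; simpl; [ring|]. rewrite IH; ring. Qed.

Lemma sum1_split f m n : sum1 f (m + n) = sum1 f m + sum1 (fun i => f (m + i)%nat) n.
Proof.
  induction n as [|n IH]; simpl; [rewrite Nat.add_0_r; ring|].
  rewrite Nat.add_succ_r; simpl; rewrite IH; ring.
Qed.

Lemma sum1_comm (F : nat -> nat -> R) m n :
  sum1 (fun j => sum1 (fun i => F i j) m) n = sum1 (fun i => sum1 (fun j => F i j) n) m.
Proof.
  induction n as [|n IH]; simpl.
  - induction m as [|m IHm]; simpl; [reflexivity|]. rewrite <- IHm; ring.
  - rewrite IH, <- sum1_plus; reflexivity.
Qed.

Lemma sum1_sum_f_R0 f n : sum1 f (S n) = sum_f_R0 (fun i => f (S i)) n.
Proof.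
  induction n as [|n IH]; [simpl; ring|].
  change (sum1 f (S (S n))) with (sum1 f (S n) + f (S (S n))). rewrite IH; simpl; ring.
Qed.

Lemma C_succ_mult n i : (i <= n)%nat ->
  Binomial.C (S n) (S i) * INR (S i) = INR (S n) * Binomial.C n i.
Proof.
  intros Hi. unfold Binomial.C. replace (S n - S i)%nat with (n - i)%nat by lia.
  rewrite !fact_simpl, !mult_INR.
  pose proof (INR_fact_neq_0 i). pose proof (INR_fact_neq_0 (n - i)).
  assert (INR (S i) <> 0) by (apply not_0_INR; lia).
  field; auto.
Qed.

Lemma sum1_binomial_derivative n x y :
  sum1 (fun j => Binomial.C n j * INR j * x ^ (n - j) * y ^ (j - 1)) n
  = INR n * (y + x) ^ (n - 1).
Proof.
  destruct n as [|n]; [simpl; ring|].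
  rewrite sum1_sum_f_R0, binomial, scal_sum. replace (S n - 1)%nat with n by lia.
  apply sum_eq. intros i Hi.
  replace (S i - 1)%nat with i by lia. replace (S n - S i)%nat with (n - i)%nat by lia.
  replace (Binomial.C (S n) (S i) * INR (S i)) with (INR (S n) * Binomial.C n i)
    by (symmetry; apply C_succ_mult; lia).
  ring.
Qed.

Lemma binval_rcons w b : binval (w ++ [b]) = (2 * binval w + Nat.b2n b)%nat.
Proof. unfold binval; rewrite fold_left_app; reflexivity. Qed.

Lemma binval_rcons_mul w b r :
  (binval (w ++ [b]) * 2 ^ r = binval w * 2 ^ S r + Nat.b2n b * 2 ^ r)%nat.
Proof. rewrite binval_rcons, Nat.pow_succ_r'; lia. Qed.

Lemma binval_fold_left w acc :
  fold_left (fun acc (b : bool) => (2 * acc + (if b then 1 else 0))%nat) w acc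
  = (acc * 2 ^ length w + binval w)%nat.
Proof.
  unfold binval. revert acc; induction w as [|b w IH]; intros acc; [simpl; lia|].
  cbn [fold_left length].
  rewrite (IH (2 * acc + _)%nat), (IH (2 * 0 + _)%nat), Nat.pow_succ_r'.
  destruct b; lia.
Qed.

Lemma binval_cons b w : binval (b :: w) = (Nat.b2n b * 2 ^ length w + binval w)%nat.
Proof. unfold binval at 1; simpl. rewrite binval_fold_left. destruct b; reflexivity. Qed.

Lemma binval_lt w : (binval w < 2 ^ length w)%nat.
Proof.
  induction w as [|b w IH]; [exact Nat.lt_0_1|].
  rewrite binval_cons; cbn [length]; rewrite Nat.pow_succ_r'. destruct b; cbn [Nat.b2n]; lia.
Qed.

Lemma binval_block_le w r : (binval w * 2 ^ r + 2 ^ r <= 2 ^ (length w + r))%nat.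
Proof.
  rewrite Nat.pow_add_r. pose proof (binval_lt w).
  replace (binval w * 2 ^ r + 2 ^ r)%nat with ((binval w + 1) * 2 ^ r)%nat by lia.
  apply Nat.mul_le_mono_r; lia.
Qed.

Lemma is_series_sum1 (F : nat -> nat -> R) (l : nat -> R) m :
  (forall i, (1 <= i <= m)%nat -> is_series (F i) (l i)) ->
  is_series (fun n => sum1 (fun i => F i n) m) (sum1 l m).
Proof.
  induction m as [|m IH]; intros HF; simpl.
  - apply is_series_Reals. intros e He. exists 0%nat. intros n _.
    rewrite sum_cte, Rmult_0_l. unfold Rdist, R_dist. rewrite Rminus_diag, Rabs_R0; exact He.
  - apply (is_series_plus (V := R_NormedModule)); [apply IH; intros; apply HF | apply HF]; lia.
Qed.

Section Generating_function.

Variable q : nat -> R.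
Hypotheses (hqnn : forall n, 0 <= q n) (hqsum : is_series q 1).

Lemma is_series_term_le n : q n <= 1.
Proof.
  apply is_series_Reals in hqsum.
  assert (Hpartial : forall n, sum_f_R0 q n <= 1).
  { apply growing_ineq.
    - intros m; rewrite tech5; specialize (hqnn (S m)); lra.
    - intros e He; destruct (hqsum e He) as [N HN]; exists N; intros m Hm; apply HN; auto. }
  destruct n as [|n]; [exact (Hpartial 0%nat)|].
  specialize (Hpartial (S n)). rewrite tech5 in Hpartial.
  pose proof (cond_pos_sum q n hqnn). lra.
Qed.

Lemma CV_radius_ge_1 : Rbar_le 1 (CV_radius q).
Proof.
  apply (proj1 (CV_radius_bounded q)). exists 1. intros n.
  rewrite pow1, Rmult_1_r, Rabs_pos_eq; [apply is_series_term_le | apply hqnn].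
Qed.

Lemma is_series_Derive_genf x : Rabs x < 1 ->
  is_series (fun n => q n * INR n * x ^ (n - 1)) (Derive (genf q) x).
Proof.
  intros Hx.
  assert (Hr : Rbar_lt (Rabs x) (CV_radius q)).
  { pose proof CV_radius_ge_1. destruct (CV_radius q); simpl in *; lra || exact I. }
  pose proof (is_pseries_derive q x Hr) as Hd. change (PSeries q) with (genf q) in Hd.
  apply is_series_decr_1.
  replace (plus _ (opp (q 0%nat * INR 0 * x ^ (0 - 1)))) with (Derive (genf q) x)
    by (unfold plus, opp; simpl; ring).
  eapply is_series_ext; [|exact Hd]. intros n.
  unfold PS_derive, scal; simpl. unfold mult; simpl.
  rewrite Nat.sub_0_r, pow_n_pow. ring.
Qed.

End Generating_function.

Lemma admissible_z_lt k z : admissible_z k z ->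
  forall i j, (i < j <= 2 ^ k)%nat -> z i < z j.
Proof.
  intros (_ & _ & Hz) i j [Hij Hj]. induction Hij as [|j Hij IH].
  - apply Hz; lia.
  - apply Rlt_trans with (z j); [apply IH; lia | apply Hz; lia].
Qed.

(* [cell_sum z a h n / (z (a + h) - z a) ^ n] is the probability that, of [n] independent
   uniform points of [[z a, z (a + h)]], the highest one lies alone in its cell
   [[z (i - 1), z i]]. *)
Definition cell_sum (z : nat -> R) (a h n : nat) : R :=
  INR n * sum1 (fun i => (z (a + i)%nat - z (a + i - 1)%nat)
                         * (z (a + i - 1)%nat - z a) ^ (n - 1)) h.

Lemma cell_sum_split z a h h' n :
  cell_sum z a (h + h') n
  = cell_sum z a h n
    + sum1 (fun j => Binomial.C n j * (z (a + h)%nat - z a) ^ (n - j)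
                     * cell_sum z (a + h) h' j) n.
Proof.
  unfold cell_sum. rewrite sum1_split, Rmult_plus_distr_l. f_equal.
  set (A := z a). set (M := z (a + h)%nat).
  set (D i := z (a + h + i)%nat - z (a + h + i - 1)%nat).
  set (Y i := z (a + h + i - 1)%nat - M).
  transitivity (sum1 (fun i => D i
    * sum1 (fun j => Binomial.C n j * INR j * (M - A) ^ (n - j) * Y i ^ (j - 1)) n) h').
  - rewrite sum1_mult_l. apply sum1_ext; intros i _.
    rewrite sum1_binomial_derivative. unfold D, Y.
    replace (a + (h + i))%nat with (a + h + i)%nat by lia.
    replace (z (a + h + i - 1)%nat - M + (M - A)) with (z (a + h + i - 1)%nat - A) by ring.
    ring.
  - rewrite (sum1_ext _ (fun j => sum1 (fun i =>
        Binomial.C n j * (M - A) ^ (n - j) * INR j * (D i * Y i ^ (j - 1))) h') n).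
    + rewrite sum1_comm. apply sum1_ext; intros i _.
      rewrite sum1_mult_l. apply sum1_ext; intros j _. ring.
    + intros j _. rewrite !sum1_mult_l. apply sum1_ext; intros i _. unfold D, Y. ring.
Qed.

Section Success_probability.

Variables (k : nat) (z : nat -> R) (p : word -> R).
Hypothesis Hz : admissible_z k z.
Hypothesis Hp : forall w, (length w < k)%nat -> p w = p_of_z k z w.

Lemma succ_cell_sum r w : (length w + r = k)%nat -> forall n,
  (z (binval w * 2 ^ r + 2 ^ r)%nat - z (binval w * 2 ^ r)%nat) ^ n * succ p r w n
  = cell_sum z (binval w * 2 ^ r) (2 ^ r) n.
Proof.
  revert w; induction r as [|r IH]; intros w Hw n.
  - unfold cell_sum; simpl. rewrite !Nat.mul_1_r.
    replace (binval w + 1 - 1)%nat with (binval w) by lia.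
    rewrite Rminus_diag. destruct n as [|[|n]]; simpl; ring.
  - set (a := (binval w * 2 ^ S r)%nat). set (h := (2 ^ r)%nat).
    assert (Eh : (2 ^ S r = h + h)%nat) by (unfold h; rewrite Nat.pow_succ_r'; lia).
    assert (IH0 := IH (w ++ [false])). assert (IH1 := IH (w ++ [true])).
    rewrite length_app, binval_rcons_mul in IH0, IH1. cbn [length Nat.b2n] in IH0, IH1.
    rewrite Nat.mul_0_l, Nat.add_0_r in IH0. rewrite Nat.mul_1_l in IH1. fold a h in IH0, IH1.
    replace (a + h + h)%nat with (a + (h + h))%nat in IH1 by lia.
    assert (Hblock : (a + (h + h) <= 2 ^ k)%nat).
    { rewrite <- Eh, <- Hw. apply binval_block_le. }
    assert (Hh : (0 < h)%nat) by (unfold h; apply Nat.neq_0_lt_0, Nat.pow_nonzero; lia).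
    assert (HAM : z a < z (a + h)%nat) by (apply (admissible_z_lt k z Hz); lia).
    assert (HMB : z (a + h)%nat < z (a + (h + h))%nat) by (apply (admissible_z_lt k z Hz); lia).
    assert (HP : p w = (z (a + (h + h))%nat - z (a + h)%nat) / (z (a + (h + h))%nat - z a)).
    { rewrite Hp by lia. unfold p_of_z. replace (k - length w)%nat with (S r) by lia.
      fold a. rewrite Eh. replace ((h + h) / 2)%nat with h; [reflexivity|].
      replace (h + h)%nat with (h * 2)%nat by lia. rewrite Nat.div_mul; lia. }
    cbn [succ]. rewrite Eh, cell_sum_split, HP.
    set (A := z a) in *. set (M := z (a + h)%nat) in *. set (B := z (a + (h + h))%nat) in *.
    set (P := (B - M) / (B - A)).
    assert (EP : B - M = (B - A) * P) by (unfold P; field; lra).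
    assert (EQ : M - A = (B - A) * (1 - P)) by (unfold P; field; lra).
    rewrite Rmult_plus_distr_l. f_equal.
    + rewrite <- IH0 by lia. rewrite EQ, Rpow_mult_distr. ring.
    + rewrite sum1_mult_l. apply sum1_ext; intros j Hj.
      rewrite <- IH1 by lia.
      replace ((B - A) ^ n) with ((B - A) ^ j * (B - A) ^ (n - j))
        by (rewrite <- pow_add; f_equal; lia).
      rewrite EP, EQ, !Rpow_mult_distr. ring.
Qed.

Lemma succ_eq_cell_sum n : succ p k [] n = cell_sum z 0 (2 ^ k) n.
Proof.
  pose proof (succ_cell_sum k [] eq_refl n) as H.
  destruct Hz as (Z0 & Z1 & _). cbn [binval fold_left] in H.
  rewrite Nat.mul_0_l, Nat.add_0_l, Z0, Z1, Rminus_0_r, pow1, Rmult_1_l in H.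
  exact H.
Qed.

Lemma rho_eq_rho_of_z q : (forall n, 0 <= q n) -> is_series q 1 ->
  rho k q p = rho_of_z k q z.
Proof.
  intros hqnn hqsum.
  assert (Hrange : forall i, (1 <= i <= 2 ^ k)%nat -> Rabs (z (i - 1)%nat) < 1).
  { intros i Hi. destruct Hz as (Z0 & Z1 & _).
    assert (Hlt1 : z (i - 1)%nat < 1) by (rewrite <- Z1; apply (admissible_z_lt k z Hz); lia).
    rewrite Rabs_pos_eq; [exact Hlt1|].
    destruct (Nat.eq_dec (i - 1) 0) as [->|Hi0]; [lra|].
    rewrite <- Z0; left; apply (admissible_z_lt k z Hz); lia. }
  unfold rho, rho_of_z. apply is_series_unique.
  apply (is_series_ext (fun n => sum1 (fun i =>
     (z i - z (i - 1)%nat) * (q n * INR n * z (i - 1)%nat ^ (n - 1))) (2 ^ k))).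
  - intros n. rewrite succ_eq_cell_sum. unfold cell_sum.
    rewrite <- Rmult_assoc, sum1_mult_l. apply sum1_ext; intros i _.
    destruct Hz as (Z0 & _). rewrite Z0, Rminus_0_r, !Nat.add_0_l. ring.
  - apply is_series_sum1. intros i Hi.
    apply (is_series_scal_l (V := R_NormedModule)).
    apply is_series_Derive_genf; auto.
Qed.

End Success_probability.

(* The inverse of [p_of_z]: the block of the word [u], with [r] rounds left, is split at
   its midpoint in ratio [(1 - p u) : p u], recursively. *)
Fixpoint z_of_p (p : word -> R) (u : word) (r i : nat) : R :=
  match r with
  | O => if Nat.eqb i 0 then 0 else 1
  | S r' => if Nat.leb i (2 ^ r') then (1 - p u) * z_of_p p (u ++ [false]) r' i
            else (1 - p u) + p u * z_of_p p (u ++ [true]) r' (i - 2 ^ r')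
  end.

Lemma z_of_p_0 p u r : z_of_p p u r 0 = 0.
Proof. revert u; induction r as [|r IH]; intros u; simpl; [|rewrite IH]; ring. Qed.

Lemma z_of_p_last p u r : z_of_p p u r (2 ^ r) = 1.
Proof.
  revert u; induction r as [|r IH]; intros u; [reflexivity|].
  assert (0 < 2 ^ r)%nat by (apply Nat.neq_0_lt_0, Nat.pow_nonzero; lia).
  cbn [z_of_p]. rewrite Nat.pow_succ_r'.
  destruct (Nat.leb_spec (2 * 2 ^ r) (2 ^ r)); [lia|].
  replace (2 * 2 ^ r - 2 ^ r)%nat with (2 ^ r)%nat by lia. rewrite IH; ring.
Qed.

Lemma z_of_p_lower p u r i : (i <= 2 ^ r)%nat ->
  z_of_p p u (S r) i = (1 - p u) * z_of_p p (u ++ [false]) r i.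
Proof. intros Hi. cbn [z_of_p]. destruct (Nat.leb_spec i (2 ^ r)); [reflexivity|lia]. Qed.

Lemma z_of_p_upper p u r i : (i <= 2 ^ r)%nat ->
  z_of_p p u (S r) (2 ^ r + i) = (1 - p u) + p u * z_of_p p (u ++ [true]) r i.
Proof.
  intros Hi. cbn [z_of_p]. destruct (Nat.leb_spec (2 ^ r + i) (2 ^ r)).
  - replace i with 0%nat by lia. rewrite Nat.add_0_r, z_of_p_last, z_of_p_0; ring.
  - replace (2 ^ r + i - 2 ^ r)%nat with i by lia. reflexivity.
Qed.

Section Inverse_protocol.

Variables (k : nat) (p : word -> R).
Hypothesis Hp : forall w, (length w < k)%nat -> 0 < p w < 1.

Lemma z_of_p_increasing r u : (length u + r = k)%nat ->
  forall i, (i < 2 ^ r)%nat -> z_of_p p u r i < z_of_p p u r (S i).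
Proof.
  revert u; induction r as [|r IH]; intros u Hu i Hi.
  - replace i with 0%nat by (simpl in Hi; lia). simpl; lra.
  - assert (Hpu := Hp u ltac:(lia)).
    assert (Hl : forall b, (length (u ++ [b]) + r = k)%nat)
      by (intros b; rewrite length_app; simpl; lia).
    rewrite Nat.pow_succ_r' in Hi.
    destruct (Nat.le_gt_cases (S i) (2 ^ r)).
    + rewrite !z_of_p_lower by lia. apply Rmult_lt_compat_l; [lra | apply IH; auto].
    + replace i with (2 ^ r + (i - 2 ^ r))%nat by lia. rewrite <- Nat.add_succ_r.
      rewrite !z_of_p_upper by lia.
      apply Rplus_lt_compat_l, Rmult_lt_compat_l; [lra | apply IH; auto; lia].
Qed.

Lemma admissible_z_of_p : admissible_z k (z_of_p p [] k).
Proof.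
  split; [apply z_of_p_0|]. split; [apply z_of_p_last|].
  intros i Hi. apply z_of_p_increasing; [reflexivity | exact Hi].
Qed.

Lemma z_of_p_block w u r : (length u + length w + r = k)%nat ->
  exists al be, be <> 0 /\ forall i, (i <= 2 ^ r)%nat ->
    z_of_p p u (length w + r) (binval w * 2 ^ r + i) = al + be * z_of_p p (u ++ w) r i.
Proof.
  revert u; induction w as [|b w IH]; intros u Hu.
  - exists 0, 1. split; [lra|]. intros i _. rewrite app_nil_r. simpl. ring.
  - assert (Hpu := Hp u ltac:(simpl in Hu; lia)).
    destruct (IH (u ++ [b])) as (al & be & Hbe & Hblock).
    { rewrite length_app; simpl in *; lia. }
    replace (u ++ b :: w) with ((u ++ [b]) ++ w) by (rewrite <- app_assoc; reflexivity).
    assert (Hle : forall i, (i <= 2 ^ r)%nat ->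
                  (binval w * 2 ^ r + i <= 2 ^ (length w + r))%nat).
    { intros i Hi. pose proof (binval_block_le w r). lia. }
    cbn [length]. rewrite binval_cons. destruct b; cbn [Nat.b2n].
    + exists ((1 - p u) + p u * al), (p u * be).
      split; [apply Rmult_integral_contrapositive; split; lra|].
      intros i Hi. replace ((1 * 2 ^ length w + binval w) * 2 ^ r + i)%nat
        with (2 ^ (length w + r) + (binval w * 2 ^ r + i))%nat by (rewrite Nat.pow_add_r; lia).
      rewrite Nat.add_succ_l, z_of_p_upper, Hblock by auto. ring.
    + exists ((1 - p u) * al), ((1 - p u) * be).
      split; [apply Rmult_integral_contrapositive; split; lra|].
      intros i Hi. replace ((0 * 2 ^ length w + binval w) * 2 ^ r + i)%nat
        with (binval w * 2 ^ r + i)%nat by lia.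
      rewrite Nat.add_succ_l, z_of_p_lower, Hblock by auto. ring.
Qed.

Lemma p_eq_p_of_z_of_p w : (length w < k)%nat -> p w = p_of_z k (z_of_p p [] k) w.
Proof.
  intros Hw. destruct (Nat.lt_exists_pred 0 (k - length w)) as (r & Er & _); [lia|].
  destruct (z_of_p_block w [] (S r)) as (al & be & Hbe & Hblock); [simpl; lia|].
  replace (length w + S r)%nat with k in Hblock by lia.
  unfold p_of_z; cbv zeta. rewrite Er.
  replace (2 ^ S r / 2)%nat with (2 ^ r)%nat
    by (rewrite Nat.pow_succ_r', Nat.mul_comm, Nat.div_mul; lia).
  assert (Hr : (2 ^ r <= 2 ^ S r)%nat) by (rewrite Nat.pow_succ_r'; lia).
  pose proof (Hblock 0%nat) as Hbottom. rewrite Nat.add_0_r in Hbottom.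
  rewrite Hbottom, !Hblock by lia. simpl app.
  rewrite z_of_p_0, z_of_p_last, z_of_p_lower, z_of_p_last by lia.
  field. replace (al + be - al) with be by ring. exact Hbe.
Qed.

End Inverse_protocol.

Theorem proposition1 (k : nat) (q : nat -> R)
  (hq0 : q 0%nat = 0) (hqnn : forall n, 0 <= q n) (hqsum : is_series q 1) :
  (forall p : word -> R,
     (forall w : word, (length w < k)%nat -> 0 < p w < 1) ->
     exists z : nat -> R,
       admissible_z k z /\
       rho k q p = rho_of_z k q z /\
       (forall w : word, (length w < k)%nat -> p w = p_of_z k z w))
  /\
  (forall z : nat -> R, admissible_z k z ->
     forall p : word -> R,
       (forall w : word, (length w < k)%nat -> p w = p_of_z k z w) ->
       rho k q p = rho_of_z k q z).
Proof.
  split.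
  - intros p Hp. exists (z_of_p p [] k).
    pose proof (admissible_z_of_p k p Hp) as Hz.
    pose proof (p_eq_p_of_z_of_p k p Hp) as Hpz.
    split; [exact Hz|]. split; [|exact Hpz].
    exact (rho_eq_rho_of_z k _ p Hz Hpz q hqnn hqsum).
  - intros z Hz p Hp. exact (rho_eq_rho_of_z k z p Hz Hp q hqnn hqsum).
Qed.
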